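(* Let $j_0\geq 0$ be a real number and $n\in\mathbb{N}$. Consider the directed graph with initial node $(0,j_0)$ in which, from each node $(m,j_m)$ with $0\leq m<n$, there are exactly two edges: one ''up'' edge to $(m+1,j_m+1)$ and one ''down'' edge to $(m+1,\max(j_m-1,0))$. For real $j$ and integer $k$, let $\Lambda^{j_0}_{j,k,n}$ denote the number of paths from $(0,j_0)$ to the node $(n,j)$ that have exactly $k$ up jumps. Then \[ \Lambda^{j_0}_{j,k,n} = \begin{cases} \binom{n}{k}, &\text{if } j=j_0+2k-n \text{ and } n-\lfloor j_0\rfloor\leq k\leq n,\\[1mm] \binom{n}{k}-\binom{n}{k+\lfloor j_0\rfloor+1}, &\text{if } j=j_0+2k-n \text{ and } n-\lfloor\frac{n+j_0}{2}\rfloor\leq k\leq n-\lfloor j_0\rfloor-1,\\[1mm] \binom{n}{k-j}-\binom{n}{k-j-1}, &\text{if } 0\leq j\leq n-\lfloor j_0\rfloor-1 \text{ (with } j \text{ an integer) and } j\leq k\leq \lfloor\frac{n-\lfloor j_0\rfloor-1+j}{2}\rfloor, \end{cases} \] and all other values of $\Lambda^{j_0}_{j,k,n}$ are zero.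
   Context: $\lfloor x\rfloor$ denotes the integer part of $x$. Binomial coefficients $\binom{n}{i}$ are taken to be $0$ when $i<0$ or $i>n$. *)

From HB Require Import structures.
From mathcomp Require Import all_boot all_order all_algebra.
From mathcomp Require Import reals.
Set Implicit Arguments. Unset Strict Implicit. Unset Printing Implicit Defensive.
Import Order.TTheory GRing.Theory Num.Theory.
Local Open Scope ring_scope.

Definition binomZ (n : nat) (i : int) : int :=
  match i with
  | Posz m => ('C(n, m))%:Z
  | Negz _ => 0
  end.

Definition step {R : realType} (j : R) (b : bool) : R :=
  if b then j + 1 else Num.max (j - 1) 0.

Definition endpos {R : realType} (j0 : R) (s : seq bool) : R := foldl step j0 s.

(* A path of length n from (0,j0) is determined by its sequence of n edge
   choices (up = true / down = false); the two out-edges of each node are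
   distinct edges. *)
Definition Lambda {R : realType} (j0 j : R) (k : int) (n : nat) : nat :=
  #|[set s : n.-tuple bool |
       ((count id s)%:Z == k) && (endpos j0 (tval s) == j)]|.

(* Read a path as a word of +1/-1 steps, let S be the unclipped walk it
   describes (S_0 = 0) and M <= 0 the minimum of S over all prefixes.  The
   clipped walk from j0 ends at max (j0 + S_n, S_n - M): it is j0 + S until S
   first drops below -j0, and S - M afterwards.  So the paths ending at
   j0 + S_n are those with M >= -floor j0, and those ending at an integer
   z > j0 + S_n are those with M = S_n - z.  Both families are counted by the
   ballot formula #{k up-steps, M >= -c} = C(n,k) - C(n,k+c+1). *)

From HB Require Import structures.
From mathcomp Require Import all_boot all_order all_algebra.
From mathcomp Require Import reals zify lra.
Import Order.TTheory GRing.Theory Num.Theory.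
Local Open Scope ring_scope.

Definition step_sign (b : bool) : int := if b then 1 else -1.

Fixpoint walk_height (s : seq bool) : int :=
  if s is b :: s' then step_sign b + walk_height s' else 0.

Fixpoint walk_min (s : seq bool) : int :=
  if s is b :: s' then Num.min 0 (step_sign b + walk_min s') else 0.

Lemma walk_heightE s : walk_height s = 2 * (count id s)%:Z - (size s)%:Z.
Proof. by elim: s => [|[] s IH] //=; rewrite IH; lia. Qed.

Lemma walk_min_bounds s :
  [/\ walk_min s <= 0, walk_min s <= walk_height s
    & (count id s)%:Z - (size s)%:Z <= walk_min s].
Proof. by elim: s => [|[] s [? ? ?]] //=; rewrite !le_min ge_min; split; lia. Qed.

Lemma card_tuple_cons n (P : pred (n.+1.-tuple bool)) :
  #|[set t | P t]| = (#|[set t : n.-tuple bool | P [tuple of true :: t]]|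
     + #|[set t : n.-tuple bool | P [tuple of false :: t]]|)%N.
Proof.
rewrite -!sum1dep_card.
pose f (p : bool * n.-tuple bool) : n.+1.-tuple bool := [tuple of p.1 :: p.2].
pose g (t : n.+1.-tuple bool) := (thead t, [tuple of behead t]).
have fK : cancel f g by case=> b t; rewrite /f /g theadE; congr pair; apply: val_inj.
have gK : cancel g f by move=> t; rewrite /f /g /= [RHS]tuple_eta.
rewrite (reindex f); last by exists g => x _; [apply: fK | apply: gK].
rewrite -(pair_big_dep xpredT
  (fun b (t : n.-tuple bool) => P [tuple of b :: t]) (fun _ _ => 1%N)) /=.
by rewrite big_bool /= addnC.
Qed.

Lemma binomZS n i : binomZ n.+1 i = binomZ n i + binomZ n (i - 1).
Proof. by case: i => [[|m]|m] //=; rewrite ?bin0 // subSS subn0 binS PoszD. Qed.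

Lemma binomZ0 (i : int) : binomZ 0 i = (i == 0)%:Z.
Proof. by case: i => [[|m]|m]. Qed.

Lemma binomZ_out n (i : int) : (i < 0) || (n%:Z < i) -> binomZ n i = 0.
Proof. by case: i => [m|m] //= h; rewrite bin_small //; lia. Qed.

Lemma binomZ_sym n (i : int) : binomZ n (n%:Z - i) = binomZ n i.
Proof.
case: i => [m|m]; last by rewrite !binomZ_out //; lia.
have [m_le|m_gt] := leqP m n; last by rewrite !binomZ_out //; lia.
by rewrite subzn //= bin_sub.
Qed.

Lemma card_count_tuple n (k : int) :
  #|[set s : n.-tuple bool | (count id s)%:Z == k]|%:Z = binomZ n k.
Proof.
elim: n k => [|n IH] k.
  rewrite binomZ0 (_ : [set s | _] = if k == 0 then setT else set0).
    by case: eqP; rewrite ?cardsT ?card_tuple ?cards0.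
  by apply/setP => s; rewrite tuple0 !inE eq_sym; case: eqP; rewrite inE.
rewrite card_tuple_cons PoszD binomZS -IH -IH addrC; congr (_ + _)%:Z.
by apply: eq_card => s; rewrite !inE /=; apply/eqP/eqP; lia.
Qed.

Definition above_paths n (k : int) (c : nat) :=
  [set s : n.-tuple bool | ((count id s)%:Z == k) && (- c%:Z <= walk_min s)].

Lemma above_paths_count n (k : int) (c : nat) : n%:Z - k <= c%:Z ->
  above_paths n k c = [set s : n.-tuple bool | (count id s)%:Z == k].
Proof.
move=> k_large; apply/setP => s; rewrite !inE.
have [_ _ walk_min_ge] := walk_min_bounds (@tval n bool s); rewrite size_tuple in walk_min_ge.
by case: eqP => //= count_s; lia.
Qed.

Lemma card_above_pathsS n (k : int) (c : nat) :
  #|above_paths n.+1 k c| =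
    (#|above_paths n (k - 1) c.+1| + if c is c'.+1 then #|above_paths n k c'| else 0)%N.
Proof.
rewrite card_tuple_cons; congr (_ + _)%N.
  by apply: eq_card => s; rewrite !inE /= le_min;
     apply/andP/andP => -[/eqP ? ?]; split; try apply/eqP; lia.
case: c => [|c].
  apply/eqP; rewrite cards_eq0; apply/eqP/setP => s; rewrite !inE /= le_min.
  by have [? _ _] := walk_min_bounds (@tval n bool s); apply/negbTE/negP => /and3P[]; lia.
by apply: eq_card => s; rewrite !inE /= le_min;
   apply/andP/andP => -[/eqP ? ?]; split; try apply/eqP; lia.
Qed.

(* Ballot count: by reflection in the barrier [-c-1], [binomZ n (k + c + 1)]
   counts the walks that reach it, provided the endpoint [2k - n] is not below it. *)
Lemma card_above_paths n (k : int) (c : nat) : n%:Z <= 2 * k + c%:Z + 1 ->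
  #|above_paths n k c|%:Z = binomZ n k - binomZ n (k + c%:Z + 1).
Proof.
elim: n k c => [|n IH] k c bound.
  rewrite above_paths_count; last lia.
  by rewrite card_count_tuple !binomZ0; lia.
rewrite card_above_pathsS PoszD IH; last lia.
rewrite !binomZS (_ : k - 1 + c.+1%:Z + 1 = k + c%:Z + 1); last lia.
case: c bound => [|c] bound.
  by rewrite (_ : k + 0%:Z + 1 = k + 1) ?addrK; lia.
rewrite IH; last lia.
by rewrite (_ : k + c.+1%:Z + 1 - 1 = k + c%:Z + 1); lia.
Qed.

Lemma endposE (R : realType) (x : R) s : 0 <= x ->
  endpos x s = Num.max (x + (walk_height s)%:~R) ((walk_height s - walk_min s)%:~R).
Proof.
elim: s x => [|b s IH] x x_ge0; first by rewrite /endpos /= addr0 subr0 (max_idPl x_ge0).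
have step_ge0 : 0 <= step x b by case: b; rewrite /step ?le_max ?lexx ?orbT //; lra.
rewrite [LHS]IH //=.
have [m_le0 m_le_h _] := walk_min_bounds s.
move: (walk_height s) (walk_min s) m_le0 m_le_h => h m.
rewrite -!(ler_int R) /Num.min; case: ifP; rewrite -(ltr_int R);
case: b {step_ge0} => /=; rewrite /step !(intrD, intrB) /Num.max;
repeat case: ifP; lra.
Qed.

Lemma eq_max_ltl (R : realDomainType) (x y z : R) :
  x < z -> (Num.max x y == z) = (y == z).
Proof.
move=> lt_xz; case: leP => // lt_yx.
by rewrite !lt_eqF // (lt_trans lt_yx).
Qed.

Lemma le_floor_half (R : archiRealFieldType) (x : int) (y : R) :
  (x <= Num.floor (y / 2)) = ((2 * x)%:~R <= y).
Proof. by rewrite floor_ge_int ler_pdivlMr // mulrC intrM. Qed.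

Section ClippedWalk.
Context {R : realType} {j0 : R} {f : nat}.
Hypothesis floor_j0 : Num.floor j0 = f%:Z.

Lemma intr_le_j0 (m : int) : (m%:~R <= j0) = (m <= f%:Z).
Proof. by rewrite -floor_ge_int floor_j0. Qed.

Lemma le_floor_half_j0 n (x : int) :
  (x <= Num.floor ((n%:R + j0) / 2)) = (2 * x <= n%:Z + f%:Z).
Proof.
rewrite le_floor_half addrC -lerBlDr -[n%:R]/(n%:Z%:~R) -intrB intr_le_j0.
by apply/idP/idP; lia.
Qed.

Let j0_ge0 : 0 <= j0. Proof. by rewrite -floor_ge0 floor_j0. Qed.

Let j0_lt : j0 < f.+1%:R.
Proof. by rewrite -[f.+1%:R]/((f.+1)%:~R) ltNge intr_le_j0; lia. Qed.

Lemma Lambda_free n (k : int) :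
  Lambda j0 (j0 + (2 * k - n%:Z)%:~R) k n = #|above_paths n k f|.
Proof.
apply: eq_card => s; rewrite !inE endposE // walk_heightE size_tuple.
case: eqP => //= ->.
by rewrite eq_maxl intrB [j0 + _]addrC lerD2l -intrN intr_le_j0 lerNl.
Qed.

Lemma Lambda_reflected_card n (k : int) (c : nat) : (f <= c)%N ->
  (Lambda j0 (2 * k - n%:Z + c.+1%:Z)%:~R k n)%:Z =
    #|above_paths n k c.+1|%:Z - #|above_paths n k c|%:Z.
Proof.
move=> f_le_c.
have sub_c : above_paths n k c \subset above_paths n k c.+1.
  by apply/subsetP => s; rewrite !inE => /andP[-> ?] /=; lia.
rewrite subzn ?subset_leq_card // -cardsDS //; congr Posz.
apply: eq_card => s; rewrite !inE endposE // walk_heightE size_tuple.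
case: eqP => //= ->; rewrite eq_max_ltl ?eqr_int; first by apply/eqP/andP; lia.
rewrite [X in _ < X]intrD [X in _ < X]addrC ltrD2r -pmulrn.
by apply: lt_le_trans j0_lt _; rewrite ler_nat.
Qed.

Lemma Lambda_reflected n (k z : int) :
  0 <= z -> 2 * k + f%:Z + 1 <= n%:Z + z ->
  (Lambda j0 z%:~R k n)%:Z = binomZ n (k - z) - binomZ n (k - z - 1).
Proof.
move=> z_ge0 k_le.
have [c z_eq f_le_c] : exists2 c : nat, z = 2 * k - n%:Z + c.+1%:Z & (f <= c)%N.
  by exists `|(z - 2 * k + n%:Z - 1)%R|%N; lia.
rewrite z_eq Lambda_reflected_card // !card_above_paths; try lia.
rewrite -(binomZ_sym n (k - _)) -(binomZ_sym n (k - _ - 1)).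
rewrite (_ : n%:Z - _ = k + c%:Z + 1); last lia.
by rewrite (_ : n%:Z - _ = k + c.+1%:Z + 1); lia.
Qed.

Lemma endpos_cases {n : nat} {k : int} (s : seq bool) :
    size s = n -> (count id s)%:Z = k ->
  (endpos j0 s = j0 + (2 * k - n%:Z)%:~R /\ n%:Z <= 2 * k + f%:Z) \/
  exists2 z : int, endpos j0 s = z%:~R & [&& 0 <= z, z <= k & 2 * k + f%:Z + 1 <= n%:Z + z].
Proof.
move=> size_s count_s; rewrite endposE // !walk_heightE size_s count_s.
have [m_le0 m_le_h m_ge] := walk_min_bounds s.
rewrite walk_heightE size_s count_s in m_le_h m_ge.
move: (walk_min s) m_le0 m_le_h m_ge => m m_le0 m_le_h m_ge.
set a := 2 * k - n%:Z.
have reflectedE : (a - m)%:~R = (- m)%:~R + a%:~R :> R by rewrite intrD addrC.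
have [low|high] := leP (- m)%:~R j0.
  left; rewrite max_l ?reflectedE ?lerD2r //; split=> //.
  by move: low; rewrite intr_le_j0; lia.
right; exists (a - m); first by rewrite max_r // reflectedE lerD2r ltW.
by move: high; rewrite ltNge intr_le_j0; lia.
Qed.

Lemma Lambda_support n (j : R) (k : int) : Lambda j0 j k n != 0%N ->
  [/\ j = j0 + (2 * k - n%:Z)%:~R, n%:Z <= 2 * k + f%:Z & k <= n%:Z] \/
  exists2 z : int, j = z%:~R & [&& 0 <= z, z <= k & 2 * k + f%:Z + 1 <= n%:Z + z].
Proof.
rewrite cards_eq0 => /set0Pn[s]; rewrite inE => /andP[/eqP count_s /eqP <-].
have count_le : k <= n%:Z by rewrite -count_s lez_nat -{2}(size_tuple s) count_size.
by case: (endpos_cases s (size_tuple s) count_s) => [[-> ?]|]; [left | right].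
Qed.

End ClippedWalk.

Theorem lemma2p1 (R : realType) (j0 : R) (n : nat) (hj0 : 0 <= j0)
    (j : R) (k : int) :
  let fj0 := Num.floor j0 in
  let case1 := j = j0 + 2 * k%:~R - n%:R /\ (n%:Z - fj0 <= k <= n%:Z) in
  let case2 := j = j0 + 2 * k%:~R - n%:R /\
      (n%:Z - Num.floor ((n%:R + j0) / 2) <= k <= n%:Z - fj0 - 1) in
  let case3 := fun z : int => j = z%:~R /\ (0 <= z <= n%:Z - fj0 - 1) /\
      (z <= k <= Num.floor ((n%:Z - fj0 - 1 + z)%:~R / 2 : R)) in
  [/\ case1 -> (Lambda j0 j k n)%:Z = binomZ n k,
      case2 -> (Lambda j0 j k n)%:Z = binomZ n k - binomZ n (k + fj0 + 1),
      forall z : int, case3 z ->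
        (Lambda j0 j k n)%:Z = binomZ n (k - z) - binomZ n (k - z - 1)
    & ~ case1 -> ~ case2 -> ~ (exists z : int, case3 z) ->
        Lambda j0 j k n = 0%N].
Proof.
have [f floor_j0] : exists f : nat, Num.floor j0 = f%:Z.
  by exists `|Num.floor j0|%N; rewrite gez0_abs // floor_ge0.
cbv zeta; rewrite floor_j0.
have free_end : j0 + 2 * k%:~R - n%:R = j0 + (2 * k - n%:Z)%:~R.
  by rewrite intrB intrM addrA.
have floor_half_ge : n%:Z - k <= Num.floor ((n%:R + j0) / 2) = (n%:Z <= 2 * k + f%:Z).
  by rewrite (le_floor_half_j0 floor_j0); apply/idP/idP; lia.
split.
- move=> [-> /andP[k_ge k_le]].
  by rewrite free_end (Lambda_free floor_j0) above_paths_count ?card_count_tuple //; lia.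
- move=> [-> /andP[k_ge k_le]].
  have n_le : n%:Z <= 2 * k + f%:Z by rewrite -floor_half_ge; lia.
  by rewrite free_end (Lambda_free floor_j0) card_above_paths //; lia.
- move=> z [-> [/andP[z_ge0 z_le] /andP[z_le_k]]].
  by rewrite le_floor_half ler_int => k_le; rewrite (Lambda_reflected floor_j0) //; lia.
- move=> not1 not2 not3; apply/eqP/negPn/negP => /(Lambda_support floor_j0).
  case=> [[j_free n_le k_le]|[z j_z /and3P[z_ge0 z_le_k k_le]]]; last first.
    apply: not3; exists z; split=> //; split; apply/andP; split; try lia.
    by rewrite le_floor_half ler_int; lia.
  rewrite -free_end in j_free; have [k_ge|k_lt] := leP (n%:Z - f%:Z) k.
    by apply: not1; split => //; apply/andP; split; lia.
  apply: not2; split => //; apply/andP; split; last lia.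
  by move: n_le; rewrite -floor_half_ge; lia.
Qed.
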